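(* Let $P$ be a finite semipure poset of length $n$ with a unique minimum element $\hat 0$, $t\ge1$, $\lambda_P:\mathrm{Cov}(\hat P)\to L_P$ an EL-labeling, $\lambda$ the induced EL-labeling of $\widehat{P*T_{t,n}}$ restricted to $(P*T_{t,n})^+=[(\hat 0,\hat 0_T),\hat 1]$, and $m\in\mathbb N$. Then the number of ascent free maximal chains of $(P*T_{t,n})^+$ of length $m+1$ equals $$\sum_{\substack{w\in\mathrm{NDA}_{m+1}(L_P)\\ w_m\not\le w_{m+1}}} c(w)\,t^{\mathrm{asc}(w)}(1+t)^{m-2\,\mathrm{asc}(w)}+\sum_{\substack{w\in\mathrm{NDA}_{m+1}(L_P)\\ w_m\le w_{m+1}}} c(w)\,t^{\mathrm{asc}(w)}(1+t)^{m+1-2\,\mathrm{asc}(w)},$$ where $c(w)$ is the number of maximal chains of $P^+$ (the interval $[\hat 0,\hat 1_P]$ of $\hat P$) of length $m+1$ whose label sequence under $\lambda_P$ is $w$.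
   Context: Rees product $P*Q$ of semipure posets (rank $r_P(x)$ = common length of maximal chains of $P_{\le x}$): the set $\{(p,q): r_P(p)\ge r_Q(q)\}$ with $(p_1,q_1)\le(p_2,q_2)$ iff $p_1\le p_2$, $q_1\le q_2$, $r_P(p_2)-r_P(p_1)\ge r_Q(q_2)-r_Q(q_1)$. $T_{t,n}$: sequences over $\{1,\dots,t\}$ of length $\le n$ ordered by prefix, minimum $\hat 0_T$, rank = length. $\hat Q$: $Q$ with a new minimum and new maximum adjoined (even if $Q$ already has them); for $\hat P$ these are $\hat 0_P,\hat 1_P$. $Q^+$: $Q$ with a new maximum adjoined. An edge labeling $\lambda:\mathrm{Cov}(Q)\to L$ of a bounded poset is an EL-labeling if each interval $[x,y]$ has a unique maximal chain with weakly increasing labels and its label sequence lexicographically precedes those of all other maximal chains of $[x,y]$. The induced labeling $\lambda$ of $\widehat{P*T_{t,n}}$ takes values in $L_P\times\{0<1\}$ (product order): the minimum is identified with $(\hat 0_P,\hat 0_T)$; for a cover $(x,k)\lessdot(y,l)$ with $(y,l)\ne\hat 1$, $\lambda=(\lambda_P(x,y),1)$ if $k<l$ and $(\lambda_P(x,y),0)$ if $k=l$; for $(x,k)\lessdot\hat 1$, $\lambda=(\lambda_P(x,\hat 1_P),0)$. A maximal chain is ascent free if no two consecutive labels $a,b$ satisfy $a\le b$. For a word $w$ of length $N$ over a poset $A$: $i\in[N-1]$ is an ascent if $w_i\le w_{i+1}$; $\mathrm{asc}(w)$ counts ascents; a double ascent is $i\in[N-2]$ with $w_i\le w_{i+1}\le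 w_{i+2}$; $\mathrm{NDA}_N(A)$ is the set of length-$N$ words over $A$ without double ascents. *)

From HB Require Import structures.
From mathcomp Require Import all_boot all_order.
Set Implicit Arguments. Unset Strict Implicit. Unset Printing Implicit Defensive.
Import Order.Theory.
Local Open Scope order_scope.

Section Generic.
Variables (X : finType) (A : pred X) (le : rel X).

Definition rlt (x y : X) := (x != y) && le x y.

Definition rcover (x y : X) : bool :=
  [&& x \in A, y \in A, rlt x y &
      [forall z, (z \in A) ==> ~~ (rlt x z && rlt z y)]].

(* maximal chains a = x_0 <. x_1 <. ... <. x_k = b of the interval [a,b],
   of length k, recorded by the tuple (x_1, ..., x_k) *)
Definition mchains (a b : X) (k : nat) : {set k.-tuple X} :=
  [set c : k.-tuple X | (a \in A) && path rcover a c && (last a c == b)].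

End Generic.

Definition labseq (X L : Type) (lam : X -> X -> L) (a : X) (c : seq X) : seq L :=
  pairmap lam a c.

Section Words.
Variables (dL : Order.disp_t) (L : porderType dL).

Definition lexlt (s t : seq L) : Prop :=
  (exists u x y s' t', [/\ s = u ++ x :: s', t = u ++ y :: t' & x < y])
  \/ (exists y t', t = s ++ y :: t').

Definition asc (w : seq L) : nat :=
  if w is x :: s then count id (pairmap (fun a b => a <= b) x s) else 0.

Fixpoint no_dasc (w : seq L) : bool :=
  match w with
  | x :: ((y :: z :: _) as s) => ~~ ((x <= y) && (y <= z)) && no_dasc s
  | _ => true
  end.

Definition NDA (N : nat) (w : seq L) : bool := (size w == N) && no_dasc w.

(* w_m <= w_(m+1) for a word of length m+1 (1-indexed), i.e. the last two
   letters form an ascent; false for words of length < 2 *)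
Definition last_asc (w : seq L) : bool :=
  if rev w is b :: a :: _ then a <= b else false.

End Words.

Definition EL_labeling (X : finType) (A : pred X) (le : rel X)
    (dL : Order.disp_t) (L : porderType dL) (lam : X -> X -> L) : Prop :=
  forall x y, x \in A -> y \in A -> le x y ->
    exists k, exists c : k.-tuple X,
      [/\ c \in mchains A le x y k,
          sorted (fun a b => a <= b) (labseq lam x c),
          (forall k' (c' : k'.-tuple X), c' \in mchains A le x y k' ->
              sorted (fun a b => a <= b) (labseq lam x c') ->
              (c' : seq X) = c) &
          (forall k' (c' : k'.-tuple X), c' \in mchains A le x y k' ->
              (c' : seq X) != c -> lexlt (labseq lam x c) (labseq lam x c'))].

Section PosetP.
Variables (d : Order.disp_t) (P : finPOrderType d).

Definition Pmchains := mchains (@predT P) (fun x y : P => x <= y).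

Definition minimal (a : P) : bool := [forall b : P, (b <= a) ==> (b == a)].

Definition semipure : Prop :=
  forall (x a1 a2 : P) k1 k2 (c1 : k1.-tuple P) (c2 : k2.-tuple P),
    minimal a1 -> minimal a2 ->
    c1 \in Pmchains a1 x k1 -> c2 \in Pmchains a2 x k2 -> k1 = k2.

Definition rank (x : P) : nat :=
  \max_(ak : P * 'I_#|P| | minimal ak.1 && (Pmchains ak.1 x ak.2 != set0))
     (ak.2 : nat).

Definition plength : nat :=
  \max_(abk : P * P * 'I_#|P| | Pmchains abk.1.1 abk.1.2 abk.2 != set0)
     (abk.2 : nat).

End PosetP.

Inductive hat (T : Type) := HBot | HElt of T | HTop.
Arguments HBot {T}. Arguments HTop {T}.

Definition hat_to (T : Type) (x : hat T) : option (option T) :=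
  match x with HBot => None | HElt p => Some (Some p) | HTop => Some None end.
Definition hat_of (T : Type) (o : option (option T)) : hat T :=
  match o with None => HBot | Some (Some p) => HElt p | Some None => HTop end.
Lemma hat_toK (T : Type) : cancel (@hat_to T) (@hat_of T).
Proof. by case. Qed.

HB.instance Definition _ (T : finType) := Finite.copy (hat T) (can_type (@hat_toK T)).

Definition hle (d : Order.disp_t) (P : porderType d) (x y : hat P) : bool :=
  match x, y with
  | HBot, _ => true
  | _, HTop => true
  | HElt p, HElt q => p <= q
  | _, _ => false
  end.

(* T_{t,n}: words over {0,...,t-1} of length <= n (prefix order)       *)
Definition Tword (t n : nat) := {k : 'I_n.+1 & k.-tuple 'I_t}.
Definition tw (t n : nat) (q : Tword t n) : seq 'I_t := tagged q.
Definition Tempty (t n : nat) : Tword t n :=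
  @Tagged 'I_n.+1 ord0 (fun k : 'I_n.+1 => k.-tuple 'I_t) [tuple].

(* (P * T_{t,n})^+ : the Rees product with a new maximum (None)        *)
Section Rees.
Variables (d : Order.disp_t) (P : finPOrderType d) (t n : nat).

Definition RP := option (P * Tword t n).

Definition Rcarrier : pred RP := fun u =>
  if u is Some (p, q) then size (tw q) <= rank p else true.

Definition Rle (u v : RP) : bool :=
  match u, v with
  | _, None => true
  | None, Some _ => false
  | Some (p1, q1), Some (p2, q2) =>
      [&& p1 <= p2, prefix (tw q1) (tw q2) &
          rank p1 + size (tw q2) <= rank p2 + size (tw q1)]
  end.

Definition ltT (q1 q2 : Tword t n) : bool :=
  prefix (tw q1) (tw q2) && (tw q1 != tw q2).

(* the induced labeling of \hat{P * T_{t,n}}, on covers of (P*T_{t,n})^+ ;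
   labels in L_P x {0 < 1}, with {0<1} = {false < true} *)
Definition Rlab (dL : Order.disp_t) (L : porderType dL)
    (lamP : hat P -> hat P -> L) (u v : RP) : L * bool :=
  match u, v with
  | Some (x, k), Some (y, l) => (lamP (HElt x) (HElt y), ltT k l)
  | Some (x, k), None => (lamP (HElt x) HTop, false)
  | _, _ => (lamP HTop HTop, false) (* not a cover of (P*T)^+ ; irrelevant *)
  end.
End Rees.

Definition lelab (dL : Order.disp_t) (L : porderType dL) (a b : L * bool) : bool :=
  (a.1 <= b.1) && (a.2 ==> b.2).

Definition ascent_free (dL : Order.disp_t) (L : porderType dL) (w : seq (L * bool)) : bool :=
  if w is x :: s then ~~ has id (pairmap (@lelab dL L) x s) else true.

From mathcomp Require Import all_boot all_order zify.
Import Order.Theory.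
Set Implicit Arguments. Unset Strict Implicit. Unset Printing Implicit Defensive.

(* A maximal chain (z0, ()) = u_0 <. u_1 <. ... <. u_m <. \hat 1 of
   (P * T_{t,n})^+ projects to a maximal chain z0 = x_0 <. ... <. x_m <. \hat 1
   of P^+ (so rank x_j = j), and its T-components are words each extending
   the previous one by at most one letter.  Hence such chains correspond
   bijectively to pairs (chain of P^+, h) with h : 'I_m -> option 'I_t
   recording the letter appended at each step.  The label of step j is the
   P-label marked by "a letter is appended"; ascent freeness then only
   constrains h locally: an ascent e_j of the P-labels forces a letter at
   step j, and an ascent e_(j-1) forbids one.  The number of ascent free
   lifts of a P-chain with label word w is thus a product of local factors
   in {0, 1, t, t+1}, which equals t^asc(w) (1+t)^(...) when w has no double
   ascent and 0 otherwise.  Summing over the chains of P^+, grouped by label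
   word, gives the theorem. *)

(* Ranks in a finite poset with a least element.  Semipurity makes
   [rank x] the length of any maximal chain of [z0, x], from which rank
   grows by one along covers and is bounded by the length of P. *)
Section Rank.
Variables (d : Order.disp_t) (P : finPOrderType d) (z0 : P).
Hypothesis z0_least : forall x : P, (z0 <= x)%O.
Hypothesis P_semipure : semipure P.

Definition pcover := rcover (@predT P) (fun x y : P => (x <= y)%O).

Lemma rlt_lt (x y : P) : rlt (fun x y : P => (x <= y)%O) x y = (x < y)%O.
Proof. by rewrite /rlt lt_def eq_sym. Qed.

Lemma pcoverE x y :
  pcover x y = (x < y)%O && [forall z, ~~ ((x < z)%O && (z < y)%O)].
Proof.
rewrite /pcover /rcover !inE /= rlt_lt; congr (_ && _).
by apply: eq_forallb => z; rewrite !rlt_lt.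
Qed.

Lemma pcover_lt x y : pcover x y -> (x < y)%O.
Proof. by rewrite pcoverE => /andP[]. Qed.

Lemma PmchainsE a b k (c : k.-tuple P) :
  (c \in Pmchains a b k) = path pcover a c && (last a c == b).
Proof. by rewrite inE. Qed.

(* A chain visits distinct elements, so its length is below #|P|; this
   bounds the indices of the maxima defining [rank] and [plength]. *)
Lemma Pmchains_size a b k (c : k.-tuple P) : c \in Pmchains a b k -> k < #|P|.
Proof.
rewrite PmchainsE => /andP[pc _].
have u : uniq (a :: c).
  apply: (@sorted_uniq _ (fun x y : P => (x < y)%O)); first exact: lt_trans.
    by move=> ?; rewrite ltxx.
  by apply: sub_path pc => x y /pcover_lt.
by have := max_card (mem (a :: (c : seq P))); rewrite (card_uniqP u) /= size_tuple.
Qed.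

Lemma minimal_least a : minimal a -> a = z0.
Proof. by move=> /forallP /(_ z0); rewrite z0_least => /eqP. Qed.

Lemma least_minimal : minimal z0.
Proof. by apply/forallP => b; apply/implyP => bz; rewrite eq_le bz z0_least. Qed.

Lemma rank_chain_length y k (c : k.-tuple P) : c \in Pmchains z0 y k -> rank y = k.
Proof.
move=> cin; apply/eqP; rewrite eqn_leq; apply/andP; split.
  apply/bigmax_leqP => [[a k']] /= /andP[/minimal_least -> /set0Pn[c' c'in]].
  by rewrite (P_semipure least_minimal least_minimal c'in cin).
apply: (@leq_bigmax_cond _ _ (fun ak : P * 'I_#|P| => (ak.2 : nat))
          (z0, Ordinal (Pmchains_size cin))).
by rewrite /= least_minimal; apply/set0Pn; exists c.
Qed.

(* Every strict interval [x, y] starts with a cover of x: take a minimal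
   element of ]x, y]. *)
Lemma cover_below x y : (x < y)%O -> exists2 p, pcover x p & (p <= y)%O.
Proof.
move=> xy; pose S z := (x < z)%O && (z <= y)%O.
have Sy : S y by rewrite /S xy lexx.
case: (arg_minnP (fun z => #|[set w | (w < z)%O]|) Sy) => p /andP[xp py] pmin.
exists p => //; rewrite pcoverE xp /=; apply/forallP => z; apply/negP => /andP[xz zp].
have := pmin z; rewrite /S xz (le_trans (ltW zp) py) => /(_ isT).
apply/negP; rewrite -ltnNge; apply: proper_card; apply/properP; split.
  by apply/subsetP => w; rewrite !inE => /lt_trans; apply.
by exists z; rewrite !inE ?zp ?ltxx.
Qed.

(* Every interval [x, y] has a maximal chain, by induction on #|]x, y]|. *)
Lemma chain_between x y : (x <= y)%O -> exists k (c : k.-tuple P), c \in Pmchains x y k.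
Proof.
move: {2}#|_| (leqnn #|[set z | (x < z)%O && (z <= y)%O]|) => N.
elim: N x => [|N IH] x h xy; case: (eqVneq x y) => [->|nxy];
  try by exists 0, [tuple]; rewrite PmchainsE /=.
  move: h; rewrite leqn0 => /eqP/cards0_eq/setP/(_ y); rewrite !inE lexx andbT.
  by rewrite lt_def eq_sym nxy xy.
have [p xp py] : exists2 p, pcover x p & (p <= y)%O.
  by apply: cover_below; rewrite lt_def eq_sym nxy xy.
have [|k [c cin]] := IH p _ py.
  rewrite -ltnS; apply: leq_trans h; apply: proper_card; apply/properP; split.
    apply/subsetP => w; rewrite !inE => /andP[pw ->]; rewrite andbT.
    exact: lt_trans (pcover_lt xp) pw.
  by exists p; rewrite !inE ?py ?ltxx ?(pcover_lt xp).
by exists k.+1, [tuple of p :: c]; move: cin; rewrite !PmchainsE /= xp.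
Qed.

Lemma rank_least : rank z0 = 0.
Proof. by apply: (@rank_chain_length z0 0 [tuple]); rewrite PmchainsE /= eqxx. Qed.

Lemma rank_witness (x : P) :
  exists c : (rank x).-tuple P, c \in Pmchains z0 x (rank x).
Proof.
have [k [c cin]] := chain_between (z0_least x).
by rewrite (rank_chain_length cin); exists c.
Qed.

Lemma rank_cover x y : pcover x y -> rank y = (rank x).+1.
Proof.
move=> xy; have [c cin] := rank_witness x.
apply: (@rank_chain_length y (rank x).+1 [tuple of rcons c y]).
move: cin; rewrite !PmchainsE /= rcons_path last_rcons eqxx andbT.
by case/andP=> -> /eqP ->.
Qed.

Lemma rank_mono (x y : P) : (x <= y)%O -> rank x <= rank y.
Proof.
move=> xy; have [c cin] := rank_witness x; have [k [c' c'in]] := chain_between xy.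
suff -> : rank y = rank x + k by exact: leq_addr.
apply: (@rank_chain_length y (rank x + k) [tuple of c ++ c']).
move: cin c'in; rewrite !PmchainsE /= cat_path last_cat.
by case/andP=> -> /eqP -> /andP[-> ->].
Qed.

Lemma rank_le_plength (x : P) : rank x <= plength P.
Proof.
have [c cin] := rank_witness x.
apply: (@leq_bigmax_cond _ _ (fun abk : P * P * 'I_#|P| => (abk.2 : nat))
          (z0, x, Ordinal (Pmchains_size cin))).
by apply/set0Pn; exists c.
Qed.

End Rank.

Section TWords.
Variables (t n : nat).

Lemma tw_inj : injective (@tw t n).
Proof.
move=> [k1 s1] [k2 s2]; rewrite /tw /= => E.
have ek : k1 = k2 by apply: val_inj; rewrite /= -(size_tuple s1) -(size_tuple s2) E.
by subst k2; rewrite (val_inj E).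
Qed.

Lemma size_tw (q : Tword t n) : size (tw q) <= n.
Proof. by case: q => k s; rewrite /tw /= size_tuple -ltnS. Qed.

(* The element of T_{t,n} with word s (the empty word if s is too long). *)
Definition tword (s : seq 'I_t) : Tword t n :=
  match (size s < n.+1) =P true with
  | ReflectT H => @Tagged _ (Ordinal H) (fun k : 'I_n.+1 => k.-tuple 'I_t) (in_tuple s)
  | ReflectF _ => Tempty t n
  end.

Lemma tw_tword s : size s <= n -> tw (tword s) = s.
Proof. by rewrite /tword; case: eqP => // H; rewrite ltnS H. Qed.

Lemma tword_tw q : tword (tw q) = q.
Proof. by apply: tw_inj; rewrite tw_tword // size_tw. Qed.

Lemma tword_nil : tword [::] = Tempty t n.
Proof. by apply: tw_inj; rewrite tw_tword. Qed.

End TWords.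

Lemma prefix_size_eq (T : eqType) (s u : seq T) :
  prefix s u -> size u <= size s -> u = s.
Proof. by rewrite prefixE => /eqP E le; rewrite -E take_oversize. Qed.

Section Covers.
Variables (d : Order.disp_t) (P : finPOrderType d) (z0 : P).
Hypothesis z0_least : forall x : P, (z0 <= x)%O.
Hypothesis P_semipure : semipure P.
Variables (t n : nat).

Notation Rcover := (rcover (@Rcarrier d P t n) (@Rle d P t n)).
Notation hcover := (rcover (@predT (hat P)) (@hle d P)).
Notation rank := (@rank d P).

Definition maximal (p : P) := [forall y, ~~ (p < y)%O].

(* If p1 <. p <= p2 and (p1, q1) <= (p2, q2) in the Rees order, there is an
   element (p, q) between them in the Rees order: keep q = q1, or extend q1
   by the next letter of q2. *)
Lemma Rees_interpolate p1 p p2 (q1 q2 : Tword t n) :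
  pcover p1 p -> (p <= p2)%O -> size (tw q1) <= rank p1 ->
  prefix (tw q1) (tw q2) -> rank p1 + size (tw q2) <= rank p2 + size (tw q1) ->
  exists q : Tword t n,
    [/\ size (tw q) <= rank p, prefix (tw q1) (tw q), prefix (tw q) (tw q2),
        rank p1 + size (tw q) <= rank p + size (tw q1)
      & rank p + size (tw q2) <= rank p2 + size (tw q)].
Proof.
move=> p1p pp2 c1 pre rk.
have rkp := rank_cover z0_least P_semipure p1p.
have rk2 := rank_mono z0_least P_semipure pp2.
have sq := size_prefix pre.
case: (eqVneq (tw q1) (tw q2)) => [E12|N12].
  by exists q1; rewrite prefix_refl -E12 prefix_refl; split=> //; lia.
have lt1 : size (tw q1) < size (tw q2).
  rewrite ltn_neqAle sq andbT; apply: contra_neq N12 => Es.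
  by apply/esym/prefix_size_eq => //; rewrite Es.
set s := take (size (tw q1)).+1 (tw q2).
have ss : size s = (size (tw q1)).+1 by rewrite size_takel.
have tws : tw (tword n s) = s.
  by rewrite tw_tword // ss; apply: leq_trans lt1 (size_tw _).
exists (tword n s); rewrite tws ss prefix_take.
have -> : prefix (tw q1) s.
  by move: pre; rewrite !prefixE -take_min (minn_idPl (leqnSn _)).
split=> //; lia.
Qed.

Lemma RcoverSS p1 q1 p2 q2 : Rcover (Some (p1, q1)) (Some (p2, q2)) =
  [&& size (tw q1) <= rank p1, size (tw q2) <= rank p2, pcover p1 p2,
      prefix (tw q1) (tw q2) & size (tw q2) <= (size (tw q1)).+1].
Proof.
rewrite /rcover /rlt !unfold_in /= !leEnat; apply/idP/idP.
- case/and4P=> c1 c2 /andP[neq le12] /forallP between.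
  have /and3P[l12 pre rk] := le12.
  have p12 : p1 != p2.
    apply: contraNneq neq => E; subst p2; rewrite leq_add2l in rk.
    by rewrite (tw_inj (prefix_size_eq pre rk)).
  have [p p1p pp2] : exists2 p, pcover p1 p & (p <= p2)%O.
    by apply: cover_below; rewrite lt_def eq_sym p12 l12.
  have [E|pnp2] := eqVneq p p2.
    subst p; have := rank_cover z0_least P_semipure p1p.
    by rewrite c1 c2 p1p pre /= => rk2; rewrite rk2 in rk; lia.
  have [q [cq pr1 pr2 r1 r2]] := Rees_interpolate p1p pp2 c1 pre rk.
  have := between (Some (p, q)).
  rewrite !unfold_in /= !leEnat cq pr1 pr2 r1 r2 (ltW (pcover_lt p1p)) pp2 !andbT /=.
  have -> : Some (p1, q1) != Some (p, q).
    by apply/eqP => -[E _]; move: (pcover_lt p1p); rewrite E ltxx.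
  by have -> : Some (p, q) != Some (p2, q2) by apply/eqP => -[E _]; rewrite E eqxx in pnp2.
- case/and5P=> c1 c2 c12 pre sz.
  have rk := rank_cover z0_least P_semipure c12.
  have lt12 := pcover_lt c12.
  rewrite c1 c2 pre /= (ltW lt12) rk.
  have -> : Some (p1, q1) != Some (p2, q2) by apply/eqP => -[E _]; rewrite E ltxx in lt12.
  have -> /= : rank p1 + size (tw q2) <= (rank p1).+1 + size (tw q1) by lia.
  apply/forallP => -[[p q]|] //=; apply/implyP => _.
  apply/negP => /and5P[/and4P[n1 l1 pr1 r1] n2 l2 pr2 r2].
  move: r1 r2; rewrite ?leEnat => r1 r2.
  move: c12; rewrite pcoverE => /andP[_ /forallP/(_ p)].
  have [E|np1] := eqVneq p p1.
    subst p; rewrite leq_add2l in r1.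
    by rewrite (tw_inj (prefix_size_eq pr1 r1)) eqxx in n1.
  have [E|np2] := eqVneq p p2.
    subst p; rewrite leq_add2l in r2.
    by rewrite (tw_inj (prefix_size_eq pr2 r2)) eqxx in n2.
  by rewrite !lt_def np1 l1 l2 /= eq_sym np2.
Qed.

Lemma RcoverSN p q : Rcover (Some (p, q)) None = (size (tw q) <= rank p) && maximal p.
Proof.
rewrite /rcover /rlt /= !unfold_in /= leEnat; apply/idP/idP.
- case/andP=> c1 /forallP between; rewrite c1 /=.
  apply/forallP => y; apply/negP => py.
  have [p' pp' _] := cover_below py.
  have lt := pcover_lt pp'; have rk := rank_mono z0_least P_semipure (ltW lt).
  have ne : Some (p, q) != Some (p', q) by apply/eqP => -[E]; rewrite E ltxx in lt.
  have := between (Some (p', q)); rewrite unfold_in /= !leEnat.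
  by rewrite (leq_trans c1 rk) (ltW lt) prefix_refl ne /= leq_add2r rk.
- case/andP=> c1 mx; rewrite c1 /=.
  apply/forallP => -[[p' q']|] //=; rewrite andbT.
  apply/implyP => _; apply/negP => /and4P[ne l pr r].
  have E : p' = p.
    apply/eqP; move/forallP: mx => /(_ p'); rewrite lt_def l andbT negbK.
    by rewrite eq_sym.
  subst p'; rewrite ?leEnat leq_add2l in r.
  by rewrite (tw_inj (prefix_size_eq pr r)) eqxx in ne.
Qed.

Lemma RcoverN v : Rcover None v = false.
Proof. by rewrite /rcover /rlt; case: v => [[p q]|] //=; rewrite !andbF. Qed.

Lemma HElt_eqE (p q : P) : (HElt p == HElt q) = (p == q).
Proof. by apply/eqP/eqP => [[]|->]. Qed.

Lemma hcover_elt p q : hcover (HElt p) (HElt q) = pcover p q.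
Proof.
rewrite pcoverE /rcover /rlt /= HElt_eqE [(p < q)%O]lt_def (eq_sym q p).
congr (_ && _); apply/idP/idP => /forallP H; apply/forallP.
- by move=> z; have := H (HElt z); rewrite /= !lt_def !HElt_eqE (eq_sym z p) (eq_sym q z).
- move=> [|z|] /=; rewrite ?andbF ?andbT //.
  by have := H z; rewrite !lt_def !HElt_eqE (eq_sym z p) (eq_sym q z).
Qed.

Lemma hcover_top p : hcover (HElt p) HTop = maximal p.
Proof.
rewrite /rcover /rlt /= /maximal; apply/idP/idP => /forallP H; apply/forallP.
- by move=> z; have := H (HElt z); rewrite /= !andbT HElt_eqE lt_def eq_sym.
- move=> [|z|] /=; rewrite ?andbF ?andbT ?eqxx //.
  by have := H z; rewrite lt_def HElt_eqE eq_sym.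
Qed.

Lemma hcover_from_top y : hcover HTop y = false.
Proof. by rewrite /rcover /rlt; case: y => [|z|] //=; rewrite eqxx. Qed.

Lemma hcover_to_bot x : hcover x HBot = false.
Proof. by rewrite /rcover /rlt; case: x => [|z|] //=; rewrite eqxx. Qed.

End Covers.

(* At step j a chain of (P * T)^+ either
   appends one of t letters to the current word or not, i.e. it chooses an
   element of option 'I_t.  If e_(j-1), e_j are the ascent bits of the
   P-labels around step j, ascent freeness forces a letter when e_j holds and
   forbids one when e_(j-1) holds; [nchoices t e_(j-1) e_j] counts the
   remaining options, and the product over all steps is the weight
   t^asc (1+t)^(...) of the theorem. *)
Section LocalFactors.
Variable t : nat.

Definition nchoices (a b : bool) : nat :=
  if a && b then 0 else if b then t else if a then 1 else t.+1.

Lemma card_nchoices (a b : bool) :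
  #|[pred o : option 'I_t | (b ==> isSome o) && (a ==> ~~ isSome o)]| = nchoices a b.
Proof.
have cN : #|[pred o : option 'I_t | ~~ isSome o]| = 1.
  by rewrite -(card1 (None : option 'I_t)); apply: eq_card => -[].
have cS : #|[pred o : option 'I_t | isSome o]| = t.
  have := cardC [pred o : option 'I_t | isSome o]; rewrite card_option card_ord.
  have -> : #|[predC [pred o : option 'I_t | isSome o]]| = 1.
    by rewrite -cN; apply: eq_card => -[].
  by rewrite addn1 => -[].
rewrite /nchoices; case: a; case: b => /=.
- by apply: eq_card0 => -[].
- by rewrite -[in RHS]cN; apply: eq_card => -[].
- by rewrite -[in RHS]cS; apply: eq_card => -[].
- by have := card_option 'I_t; rewrite card_ord => <-; apply: eq_card => -[].
Qed.

Fixpoint prod_nchoices (a : bool) (e : seq bool) : nat :=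
  if e is b :: e' then nchoices a b * prod_nchoices b e' else 1.

Fixpoint nfalse_pairs (a : bool) (e : seq bool) : nat :=
  if e is b :: e' then (~~ a && ~~ b) + nfalse_pairs b e' else 0.

Fixpoint no_two_true (e : seq bool) : bool :=
  match e with
  | x :: ((y :: _) as s) => ~~ (x && y) && no_two_true s
  | _ => true
  end.

Lemma prod_nchoicesE a e : prod_nchoices a e =
  if no_two_true (a :: e) then t ^ count id e * (1 + t) ^ nfalse_pairs a e else 0.
Proof.
elim: e a => [|b e IH] a; first by rewrite /= muln1.
have -> : no_two_true [:: a, b & e] = ~~ (a && b) && no_two_true (b :: e) by [].
rewrite [prod_nchoices _ _]/= IH; case: (no_two_true (b :: e));
  rewrite /nchoices; case: a; case: b; rewrite /= ?muln0 ?mul1n ?add0n //.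
- by rewrite expnS mulnA.
- by rewrite add1n expnS mulnCA.
Qed.

(* In a sequence without adjacent true bits, pairs of false bits are
   what remains after removing each true bit with one false neighbour. *)
Lemma nfalse_pairs_count a e : no_two_true (a :: e) ->
  nfalse_pairs a e + a + count id e = size e - count id e + last a e.
Proof.
elim: e a => [|b e IH] a; first by move=> _ /=; rewrite subnn; case: a.
move=> /= /andP[nab nc]; move: (IH b nc) (count_size id e) nab; clear IH nc.
by case: a; case: b => //= *; lia.
Qed.

Lemma prod_nchoices_big a e :
  \prod_(j < size e) nchoices (nth a (a :: e) j) (nth false e j) = prod_nchoices a e.
Proof.
elim: e a => [|b e IH] a /=; first by rewrite big_ord0.
rewrite big_ord_recl /= -IH; congr (_ * _); apply: eq_bigr => j _.
by rewrite add0n (set_nth_default b a) //= ltnS ltnW.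
Qed.

End LocalFactors.

Section AscentBits.
Variables (dL : Order.disp_t) (L : porderType dL).

Definition ascents (x : L) (s : seq L) : seq bool := pairmap (fun a b => (a <= b)%O) x s.

Lemma no_dasc_ascents x s : no_dasc (x :: s) = no_two_true (ascents x s).
Proof.
elim: s x => [|y s IH] x //; case: s IH => [|z s] IH //.
have -> : no_dasc [:: x, y, z & s] = ~~ ((x <= y)%O && (y <= z)%O) && no_dasc [:: y, z & s].
  by [].
by rewrite IH.
Qed.

Lemma last_asc_ascents x s : last_asc (x :: s) = last false (ascents x s).
Proof.
elim: s x => [|y s IH] x //; case: s IH => [|z s] IH; first by rewrite /last_asc.
have -> : last_asc [:: x, y, z & s] = last_asc [:: y, z & s].
  rewrite /last_asc (rev_cons x [:: y, z & s]).
  by case: (rev [:: y, z & s]) (size_rev [:: y, z & s]) => [|b [|a r]].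
by rewrite IH.
Qed.

(* The summand of the theorem attached to a word w of length m+1. *)
Definition weight (t m : nat) (w : seq L) : nat :=
  if NDA m.+1 w then
    t ^ asc w * (1 + t) ^ (if last_asc w then m.+1 - 2 * asc w else m - 2 * asc w)
  else 0.

(* The product of local factors over the ascent bits of a word (with no
   ascent before the first step) is its weight. *)
Lemma prod_nchoices_weight t m x (s : seq L) : size s = m ->
  prod_nchoices t false (ascents x s) = weight t m (x :: s).
Proof.
move=> sz; rewrite prod_nchoicesE /weight /NDA no_dasc_ascents last_asc_ascents.
rewrite [size _]/= sz eqxx [asc _]/= -/(ascents x s).
set e := ascents x s.
have se : size e = m by rewrite size_pairmap.
have nc0 : no_two_true (false :: e) = no_two_true e by case: (e).
rewrite nc0; case nc: (no_two_true e) => //.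
have := @nfalse_pairs_count false e; rewrite nc0 nc se addn0 => /(_ isT).
have := count_size id e; rewrite se.
by case: (last false e) => /= H1 H2; congr (_ * _ ^ _); lia.
Qed.

Lemma ascent_freeP (l : seq (L * bool)) x :
  reflect (forall i, i < (size l).-1 -> ~~ lelab (nth x l i) (nth x l i.+1))
          (ascent_free l).
Proof.
case: l => [|y l] /=; first by constructor.
apply: (iffP negP) => H.
- move=> i il; apply/negP => Hi; apply: H; apply/(has_nthP false).
  by exists i; rewrite ?size_pairmap // (nth_pairmap x).
- case/(has_nthP false) => i; rewrite size_pairmap => il.
  by rewrite (nth_pairmap x) //; apply/negP; apply: H.
Qed.

End AscentBits.

(* For labels (x_i, b_i) in L x {0 < 1} with e_i := (x_i <= x_(i+1)) and
   b_k = false, having no ascent among the first k+1 labels is the local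
   condition: e_j forces b_j, and e_(j-1) forbids b_j. *)
Lemma ascent_free_local k (e b : nat -> bool) : b k = false ->
  (forall i, i < k -> ~~ (e i && (b i ==> b i.+1))) <->
  (forall j, j < k -> (e j ==> b j) && ((0 < j) && e j.-1 ==> ~~ b j)).
Proof.
move=> bk; split=> H.
- move=> j jk; apply/andP; split.
    by have := H j jk; case: (e j) => //=; case: (b j).
  case: j jk => [|j] //= jk; apply/implyP => ej.
  by have := H j (ltnW jk); rewrite ej /=; case: (b j.+1); rewrite ?implybT.
- move=> i ik; apply/negP => /andP[ei bi].
  have := H i ik; rewrite ei /= => /andP[bi' _]; rewrite bi' /= in bi.
  case: (ltngtP i.+1 k) ik => // [lt|eq] _.
    by have := H i.+1 lt; rewrite /= ei bi implybT.
  by rewrite eq bk in bi.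
Qed.

Section Chains.
Variables (d : Order.disp_t) (P : finPOrderType d) (z0 : P).
Hypothesis z0_least : forall x : P, (z0 <= x)%O.
Hypothesis P_semipure : semipure P.
Variables (t n m : nat).
Hypothesis plength_n : plength P = n.

Notation RPt := (RP P t n).
Notation Rcover := (rcover (@Rcarrier d P t n) (@Rle d P t n)).
Notation hcover := (rcover (@predT (hat P)) (@hle d P)).

Definition Rbot : RPt := Some (z0, Tempty t n).
Definition Pchains := mchains (@predT (hat P)) (@hle d P) (HElt z0) HTop m.+1.
Definition PTchains := mchains (@Rcarrier d P t n) (@Rle d P t n) Rbot None m.+1.

Definition hnth (pc : seq (hat P)) j := nth (HElt z0) (HElt z0 :: pc) j.
Definition pnth (pc : seq (hat P)) j : P := if hnth pc j is HElt p then p else z0.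

Lemma PchainsP (pc : (m.+1).-tuple (hat P)) : pc \in Pchains ->
  (forall i, i <= m -> hcover (hnth pc i) (hnth pc i.+1)) /\ hnth pc m.+1 = HTop.
Proof.
rewrite inE => /andP[/andP[_ /(pathP (HElt z0)) pth] /eqP lst].
split; first by move=> i im; apply: pth; rewrite size_tuple ltnS.
by rewrite /hnth -lst (last_nth (HElt z0)) size_tuple.
Qed.

Lemma Pchains_struct pc : pc \in Pchains ->
  [/\ forall j, j <= m -> hnth pc j = HElt (pnth pc j),
      forall j, j < m -> pcover (pnth pc j) (pnth pc j.+1),
      maximal (pnth pc m) & hnth pc m.+1 = HTop].
Proof.
move=> /PchainsP [cv lst].
have hE j : j <= m -> hnth pc j = HElt (pnth pc j).
  case: j => [|j] jm //; have := cv j (ltnW jm); have := cv j.+1 jm.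
  by rewrite /pnth; case: (hnth pc j.+1) => [|p|] //; rewrite ?hcover_to_bot ?hcover_from_top.
split=> //.
- by move=> j jm; have := cv j (ltnW jm); rewrite (hE j (ltnW jm)) (hE j.+1 jm) hcover_elt.
- by have := cv m (leqnn m); rewrite (hE m (leqnn m)) lst hcover_top.
Qed.

Lemma Pchains_of (pc : (m.+1).-tuple (hat P)) :
  (forall j, j <= m -> hnth pc j = HElt (pnth pc j)) ->
  (forall j, j < m -> pcover (pnth pc j) (pnth pc j.+1)) ->
  maximal (pnth pc m) -> hnth pc m.+1 = HTop -> pc \in Pchains.
Proof.
move=> hE cv mx lst; rewrite inE /=; apply/andP; split.
  apply/(pathP (HElt z0)) => i; rewrite size_tuple ltnS => im.
  rewrite -/(hnth pc i) -[nth _ pc i]/(hnth pc i.+1).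
  case: (ltngtP i m) im => // [lt|eq] _.
    by rewrite (hE i (ltnW lt)) (hE i.+1 lt) hcover_elt cv.
  by subst i; rewrite (hE m (leqnn m)) lst hcover_top.
by rewrite (last_nth (HElt z0)) size_tuple -/(hnth pc m.+1) lst.
Qed.

Lemma rank_pnth pc : pc \in Pchains -> forall j, j <= m -> rank (pnth pc j) = j.
Proof.
move=> /Pchains_struct [_ cv _ _]; elim=> [|j IH] jm; first exact: rank_least.
by rewrite (rank_cover z0_least P_semipure (cv j jm)) IH // ltnW.
Qed.

(* The existence of a chain of length m+1 forces m <= n, so every word of
   length at most m is an element of T_{t,n}. *)
Lemma Pchains_le_n pc : pc \in Pchains -> m <= n.
Proof.
move=> pin; rewrite -plength_n -(rank_pnth pin (leqnn m)).
exact: rank_le_plength.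
Qed.

Definition rnth (ch : seq RPt) j := nth Rbot (Rbot :: ch) j.
Definition rfst (u : RPt) : P := if u is Some (p, _) then p else z0.
Definition rsnd (u : RPt) : seq 'I_t := if u is Some (_, q) then tw q else [::].

Lemma PTchainsP (ch : (m.+1).-tuple RPt) : ch \in PTchains ->
  (forall i, i <= m -> Rcover (rnth ch i) (rnth ch i.+1)) /\ rnth ch m.+1 = None.
Proof.
rewrite inE => /andP[/andP[_ /(pathP Rbot) pth] /eqP lst].
split; first by move=> i im; apply: pth; rewrite size_tuple ltnS.
by rewrite /rnth -lst (last_nth Rbot) size_tuple.
Qed.

Lemma PTchains_of (ch : (m.+1).-tuple RPt) :
  (forall i, i <= m -> Rcover (rnth ch i) (rnth ch i.+1)) -> rnth ch m.+1 = None ->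
  ch \in PTchains.
Proof.
move=> cv lst; rewrite inE -andbA; apply/and3P; split.
- by rewrite unfold_in /= leEnat.
- by apply/(pathP Rbot) => i; rewrite size_tuple ltnS => im; apply: cv.
- by rewrite (last_nth Rbot) size_tuple -/(rnth ch m.+1) lst.
Qed.

Lemma PTchains_struct ch : ch \in PTchains ->
  [/\ forall j, j <= m -> rnth ch j = Some (rfst (rnth ch j), tword n (rsnd (rnth ch j))),
      forall j, j < m -> [&& pcover (rfst (rnth ch j)) (rfst (rnth ch j.+1)),
                          prefix (rsnd (rnth ch j)) (rsnd (rnth ch j.+1)) &
                          size (rsnd (rnth ch j.+1)) <= (size (rsnd (rnth ch j))).+1],
      maximal (rfst (rnth ch m)) & rnth ch m.+1 = None].
Proof.
move=> /PTchainsP [cv lst].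
have sE j : j <= m -> exists p q, rnth ch j = Some (p, q).
  case: j => [|j] jm; first by exists z0, (Tempty t n).
  have := cv j.+1 jm; case: (rnth ch j.+1) => [[p q]|]; first by exists p, q.
  by rewrite RcoverN.
split=> //.
- by move=> j jm; have [p [q ->]] := sE j jm; rewrite /= tword_tw.
- move=> j jm; have := cv j (ltnW jm).
  have [p [q ->]] := sE j (ltnW jm); have [p' [q' ->]] := sE j.+1 jm.
  by rewrite (RcoverSS z0_least P_semipure) => /and5P[_ _ -> -> ->].
- have := cv m (leqnn m); have [p [q E]] := sE m (leqnn m).
  by rewrite E lst (RcoverSN z0_least P_semipure) => /andP[].
Qed.

Definition step_letter (h : {ffun 'I_m -> option 'I_t}) j : option 'I_t :=
  oapp h None (insub j : option 'I_m).
Definition letter (o : option 'I_t) : seq 'I_t := if o is Some a then [:: a] else [::].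
Definition word_upto h j : seq 'I_t := pmap id (mkseq (step_letter h) j).

Lemma step_letterE h (i : 'I_m) : step_letter h i = h i.
Proof.
by rewrite /step_letter (insubT (fun j => j < m) (ltn_ord i)) /=; congr (h _); apply: val_inj.
Qed.

Lemma word_uptoS h j : word_upto h j.+1 = word_upto h j ++ letter (step_letter h j).
Proof. by rewrite /word_upto mkseqS -cats1 pmap_cat; case: step_letter. Qed.

Lemma size_word_upto h j : size (word_upto h j) <= j.
Proof.
elim: j => [|j IH] //; rewrite word_uptoS size_cat.
by case: step_letter => /=; lia.
Qed.

Definition lift_elt (x : hat P) (q : seq 'I_t) : RPt :=
  if x is HElt p then Some (p, tword n q) else None.
Definition lifted pc h j := lift_elt (hnth pc j) (word_upto h j).

Lemma lift_chain_size pc h : size (mkseq (fun j => lifted pc h j.+1) m.+1) == m.+1.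
Proof. by rewrite size_mkseq. Qed.
Definition lift_chain pc h : (m.+1).-tuple RPt := Tuple (lift_chain_size pc h).

Lemma rnth_lift pc h j : j <= m.+1 -> rnth (lift_chain pc h) j = lifted pc h j.
Proof.
by case: j => [|j] jm; rewrite /rnth /lifted //= ?nth_mkseq // /Rbot tword_nil.
Qed.

Lemma lifted_elt pc h j : pc \in Pchains -> j <= m ->
  lifted pc h j = Some (pnth pc j, tword n (word_upto h j)).
Proof. by move=> pin jm; case: (Pchains_struct pin) => hE _ _ _; rewrite /lifted (hE j jm). Qed.

Lemma lifted_top pc h : pc \in Pchains -> lifted pc h m.+1 = None.
Proof. by move=> pin; case: (Pchains_struct pin) => _ _ _ lst; rewrite /lifted lst. Qed.

Lemma tw_word_upto pc h j : pc \in Pchains -> j <= m ->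
  tw (tword n (word_upto h j)) = word_upto h j.
Proof.
move=> pin jm; rewrite tw_tword //.
exact: leq_trans (size_word_upto h j) (leq_trans jm (Pchains_le_n pin)).
Qed.

Lemma lift_chain_in pc h : pc \in Pchains -> lift_chain pc h \in PTchains.
Proof.
move=> pin; apply: PTchains_of; last by rewrite rnth_lift // lifted_top.
move=> i im; rewrite (rnth_lift pc h (leqW im)) (rnth_lift pc h (im : i.+1 <= m.+1)).
rewrite (lifted_elt h pin im); case: (Pchains_struct pin) => _ cv mx _.
case: (ltngtP i m) im => // [lt|eq] _; last first.
  subst i; rewrite lifted_top // (RcoverSN z0_least P_semipure) (tw_word_upto h pin) // mx andbT.
  by rewrite (rank_pnth pin) // size_word_upto.
rewrite (lifted_elt h pin lt) (RcoverSS z0_least P_semipure).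
rewrite !(tw_word_upto h pin) ?(ltnW lt) // !(rank_pnth pin) ?(ltnW lt) // cv //.
rewrite word_uptoS prefix_prefix size_cat.
have := size_word_upto h i; have := size_word_upto h i.+1; rewrite word_uptoS size_cat.
by case: step_letter => /=; lia.
Qed.

Definition proj (u : RPt) : hat P := if u is Some (p, _) then HElt p else HTop.
Definition proj_chain (ch : (m.+1).-tuple RPt) : (m.+1).-tuple (hat P) :=
  [tuple of map proj ch].
Definition steps (ch : (m.+1).-tuple RPt) : {ffun 'I_m -> option 'I_t} :=
  [ffun j : 'I_m => nth None (map Some (rsnd (rnth ch j.+1))) (size (rsnd (rnth ch j)))].

Lemma hnth_proj ch j : j <= m.+1 -> hnth (proj_chain ch) j = proj (rnth ch j).
Proof. by case: j => [|j] jm //; rewrite /hnth /rnth /= (nth_map Rbot) // size_tuple. Qed.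

Lemma proj_lift pc h : pc \in Pchains -> proj_chain (lift_chain pc h) = pc.
Proof.
move=> pin; apply: val_inj; apply: (@eq_from_nth _ (HElt z0)); first by rewrite !size_tuple.
move=> i; rewrite size_tuple ltnS => im.
rewrite -[nth _ (proj_chain _) i]/(hnth (proj_chain (lift_chain pc h)) i.+1).
rewrite hnth_proj // rnth_lift // -[nth _ pc i]/(hnth pc i.+1).
case: (Pchains_struct pin) => hE _ _ lst.
case: (ltngtP i m) im => // [lt|eq] _; first by rewrite (lifted_elt h pin lt) (hE _ lt).
by subst i; rewrite lifted_top.
Qed.

Lemma nth_letter (s : seq 'I_t) o : nth None (map Some (s ++ letter o)) (size s) = o.
Proof. by rewrite map_cat nth_cat size_map ltnn subnn; case: o. Qed.

Lemma steps_lift pc h : pc \in Pchains -> steps (lift_chain pc h) = h.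
Proof.
move=> pin; apply/ffunP => j; rewrite ffunE; have jm := ltn_ord j.
rewrite (rnth_lift pc h (leqW jm)) (rnth_lift pc h (leqW (ltnW jm))).
rewrite (lifted_elt h pin jm) (lifted_elt h pin (ltnW jm)) /=.
rewrite (tw_word_upto h pin jm) (tw_word_upto h pin (ltnW jm)).
by rewrite word_uptoS nth_letter step_letterE.
Qed.

Lemma prefix_letter (s u : seq 'I_t) : prefix s u -> size u <= (size s).+1 ->
  u = s ++ letter (nth None (map Some u) (size s)).
Proof.
move=> /prefixP [r ->]; rewrite size_cat -addn1 leq_add2l.
case: r => [|a [|b r]] // _; first by rewrite !cats0 nth_default ?size_map /= ?cats0.
by rewrite (_ : [:: a] = letter (Some a)) // nth_letter.
Qed.

Lemma word_upto_steps ch : ch \in PTchains ->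
  forall j, j <= m -> word_upto (steps ch) j = rsnd (rnth ch j).
Proof.
move=> cin; case: (PTchains_struct cin) => _ cv _ _.
elim=> [|j IH] jm //; rewrite word_uptoS IH ?(ltnW jm) //.
rewrite -[j]/(nat_of_ord (Ordinal jm)) step_letterE ffunE /=.
by case/and3P: (cv j jm) => _ pre sz; rewrite -prefix_letter.
Qed.

Lemma proj_chain_in ch : ch \in PTchains -> proj_chain ch \in Pchains.
Proof.
move=> cin; case: (PTchains_struct cin) => hE cv mx lst.
have pE j : j <= m -> pnth (proj_chain ch) j = rfst (rnth ch j).
  by move=> jm; rewrite /pnth hnth_proj ?(leqW jm) // (hE j jm).
apply: Pchains_of.
- by move=> j jm; rewrite hnth_proj ?(leqW jm) // pE // (hE j jm).
- by move=> j jm; rewrite !pE ?(ltnW jm) //; case/and3P: (cv j jm).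
- by rewrite pE.
- by rewrite hnth_proj // lst.
Qed.

Lemma lift_proj ch : ch \in PTchains -> lift_chain (proj_chain ch) (steps ch) = ch.
Proof.
move=> cin; have pin := proj_chain_in cin; case: (PTchains_struct cin) => hE _ _ lst.
apply: val_inj; apply: (@eq_from_nth _ Rbot); first by rewrite !size_tuple.
move=> i; rewrite size_tuple ltnS => im.
rewrite -[nth _ (lift_chain _ _) i]/(rnth (lift_chain (proj_chain ch) (steps ch)) i.+1).
rewrite rnth_lift // -[nth _ ch i]/(rnth ch i.+1).
case: (ltngtP i m) im => // [lt|eq] _; last by subst i; rewrite lifted_top.
rewrite (lifted_elt _ pin lt) (word_upto_steps cin lt) [RHS](hE _ lt).
by rewrite /pnth hnth_proj ?(leqW lt) // (hE _ lt).
Qed.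


Variables (dL : Order.disp_t) (L : porderType dL) (lamP : hat P -> hat P -> L).

Notation AF ch := (ascent_free (labseq (Rlab lamP) Rbot ch)).

Definition plabel (pc : seq (hat P)) i := lamP (hnth pc i) (hnth pc i.+1).
Definition pasc pc i := (plabel pc i <= plabel pc i.+1)%O.
Definition admissible pc (j : 'I_m) : pred (option 'I_t) :=
  [pred o | (pasc pc j ==> isSome o) && ((0 < j) && pasc pc j.-1 ==> ~~ isSome o)].

Lemma label_lift pc h i : pc \in Pchains -> i <= m ->
  nth (lamP HTop HTop, false) (labseq (Rlab lamP) Rbot (lift_chain pc h)) i =
  (plabel pc i, (i < m) && isSome (step_letter h i)).
Proof.
move=> pin im; rewrite /labseq (nth_pairmap Rbot) ?size_tuple ?ltnS //.
rewrite -[nth Rbot (Rbot :: _) i]/(rnth (lift_chain pc h) i).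
rewrite -[nth Rbot _ i]/(rnth (lift_chain pc h) i.+1).
rewrite (rnth_lift pc h (leqW im)) (rnth_lift pc h (im : i < m.+1)) (lifted_elt h pin im) /plabel.
case: (Pchains_struct pin) => hE _ _ lst.
case: (ltngtP i m) im => // [lt|eq] _; last first.
  by subst i; rewrite (lifted_top h pin) /= (hE m (leqnn m)) lst.
rewrite (lifted_elt h pin lt) /= (hE i (ltnW lt)) (hE i.+1 lt); congr (_, _).
rewrite /ltT !(tw_word_upto h pin) ?(ltnW lt) // word_uptoS prefix_prefix /=.
case: (step_letter h i) => [a|] /=; last by rewrite cats0 eqxx.
by apply/negP => /eqP /(congr1 size); rewrite size_cat /= addn1 => /eqP; rewrite eqn_leq ltnn andbF.
Qed.

Lemma ascent_free_lift pc h :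
  pc \in Pchains -> AF (lift_chain pc h) = (h \in family (admissible pc)).
Proof.
move=> pin; pose b i := (i < m) && isSome (step_letter h i).
have bm : b m = false by rewrite /b ltnn.
have [toL toR] := ascent_free_local (pasc pc) bm.
have sz : (size (labseq (Rlab lamP) Rbot (lift_chain pc h))).-1 = m.
  by rewrite /labseq size_pairmap size_tuple.
apply/(ascent_freeP _ (lamP HTop HTop, false))/familyP; rewrite sz => H.
- have H' i : i < m -> ~~ (pasc pc i && (b i ==> b i.+1)).
    by move=> im; have := H i im; rewrite (label_lift h pin (ltnW im)) (label_lift h pin im).
  by move=> j; have := toL H' j (ltn_ord j); rewrite inE /b ltn_ord /= step_letterE.
- move=> i im; rewrite (label_lift h pin (ltnW im)) (label_lift h pin im).
  apply: toR i im => j jm; have := H (Ordinal jm).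
  by rewrite inE /b /= jm -[j]/(nat_of_ord (Ordinal jm)) step_letterE.
Qed.

Lemma card_ascent_free_lifts pc : pc \in Pchains ->
  #|[set h | AF (lift_chain pc h)]| = weight t m (labseq lamP (HElt z0) pc).
Proof.
move=> pin.
have -> : #|[set h | AF (lift_chain pc h)]| = #|family (admissible pc)|.
  by apply: eq_card => h; rewrite inE ascent_free_lift.
rewrite card_family foldrE big_map big_enum /=.
under eq_bigr => j _ do rewrite card_nchoices.
have [x [s [Ew sz]]] : exists x s, labseq lamP (HElt z0) pc = x :: s /\ size s = m.
  have : size (labseq lamP (HElt z0) pc) = m.+1 by rewrite /labseq size_pairmap size_tuple.
  by case: (labseq _ _ _) => [|x s] // [] ?; exists x, s.
have nthw i : i <= m -> nth x (x :: s) i = plabel pc i.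
  by move=> im; rewrite -Ew /labseq (nth_pairmap (HElt z0)) ?size_tuple.
have ascE i : i < m -> nth false (ascents x s) i = pasc pc i.
  move=> im; rewrite (nth_pairmap x) ?sz // -[nth x s i]/(nth x (x :: s) i.+1).
  by rewrite !nthw ?(ltnW im).
rewrite Ew -(prod_nchoices_weight _ _ sz) -prod_nchoices_big size_pairmap sz.
apply: eq_bigr => -[[|j] jm] _ /=; first by rewrite ascE.
by rewrite !ascE // ltnW.
Qed.

(* Lifting is injective on chains of P^+: both components are recovered. *)
Lemma lift_chain_inj pc pc' h h' : pc \in Pchains -> pc' \in Pchains ->
  lift_chain pc h = lift_chain pc' h' -> pc = pc' /\ h = h'.
Proof.
move=> p1 p2 E; have E1 : pc = pc' by rewrite -(proj_lift h p1) -(proj_lift h' p2) E.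
by subst pc'; split=> //; rewrite -(steps_lift h p1) -(steps_lift h' p2) E.
Qed.

Lemma count_ascent_free_chains :
  #|[set ch in PTchains | AF ch]| = \sum_(pc in Pchains) weight t m (labseq lamP (HElt z0) pc).
Proof.
pose lift_pair (x : (m.+1).-tuple (hat P) * {ffun 'I_m -> option 'I_t}) :=
  lift_chain x.1 x.2.
pose D := [set x | (x.1 \in Pchains) && AF (lift_pair x)].
have -> : [set ch in PTchains | AF ch] = [set lift_pair x | x in D].
  apply/setP => ch; rewrite inE; apply/andP/imsetP.
  - case=> cin af; exists (proj_chain ch, steps ch); last by rewrite /lift_pair lift_proj.
    by rewrite inE; apply/andP; split; [exact: proj_chain_in | rewrite /lift_pair lift_proj].
  - by case=> -[pc h]; rewrite inE => /andP[pin af] ->; split=> //; exact: lift_chain_in.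
rewrite card_in_imset; last first.
  move=> [pc h] [pc' h']; rewrite [_ \in D]inE => /andP[p1 _].
  rewrite [_ \in D]inE => /andP[p2 _] E; move: p1 p2 => /= p1 p2.
  by case: (lift_chain_inj p1 p2 E) => /= -> ->.
rewrite -sum1_card.
transitivity (\sum_(pc in Pchains) \sum_(h | AF (lift_chain pc h)) 1).
  by rewrite pair_big_dep; apply: eq_bigl => -[pc h]; rewrite inE.
apply: eq_bigr => pc pin; rewrite -card_ascent_free_lifts // -sum1_card.
by apply: eq_bigl => h; rewrite inE.
Qed.

End Chains.

Lemma sum_by_fibres (T : finType) (U : eqType) (S : {set T}) (f : T -> U) (G : U -> nat) :
  \sum_(w <- undup [seq f x | x <- enum S]) #|[set x in S | f x == w]| * G w =
  \sum_(x in S) G (f x).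
Proof.
have fibre w : #|[set x in S | f x == w]| * G w = \sum_(x in S) (if f x == w then G (f x) else 0).
  rewrite -sum_nat_const big_mkcond [RHS]big_mkcond; apply: eq_bigr => x _.
  by rewrite inE; case: (x \in S) => //=; case: eqP => // ->.
rewrite (eq_bigr _ (fun w _ => fibre w)) exchange_big /=; apply: eq_bigr => x xS.
rewrite (bigD1_seq (f x)) ?undup_uniq ?mem_undup ?map_f ?mem_enum //= eqxx.
by rewrite big1 ?addn0 // => w; rewrite eq_sym => /negbTE ->.
Qed.

Lemma split_weight (dL : Order.disp_t) (L : porderType dL) (t m : nat)
    (W : seq (seq L)) (c : seq L -> nat) :
  \sum_(w <- W | NDA m.+1 w && ~~ last_asc w) c w * t ^ asc w * (1 + t) ^ (m - 2 * asc w)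
  + \sum_(w <- W | NDA m.+1 w && last_asc w) c w * t ^ asc w * (1 + t) ^ (m.+1 - 2 * asc w)
  = \sum_(w <- W) c w * weight t m w.
Proof.
rewrite big_mkcond [X in _ + X]big_mkcond -big_split /=; apply: eq_bigr => w _.
by rewrite /weight; case: (NDA _ w); case: (last_asc w); rewrite /= ?muln0 ?addn0 ?add0n ?mulnA.
Qed.

Local Open Scope order_scope.

Theorem theorem3p6 (d : Order.disp_t) (P : finPOrderType d) (z0 : P)
    (n t : nat) (dL : Order.disp_t) (L : porderType dL)
    (lamP : hat P -> hat P -> L) (m : nat) :
  (forall x : P, z0 <= x) ->
  semipure P ->
  plength P = n ->
  (0 < t)%N ->
  EL_labeling (@predT (hat P)) (@hle d P) lamP ->
  let R0 : RP P t n := Some (z0, Tempty t n) in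
  let PTchains := mchains (@Rcarrier d P t n) (@Rle d P t n) R0 None m.+1 in
  let Pchains := mchains (@predT (hat P)) (@hle d P) (HElt z0) HTop m.+1 in
  let c (w : seq L) : nat :=
    #|[set ch in Pchains | labseq lamP (HElt z0) ch == w]| in
  let W : seq (seq L) :=
    undup [seq labseq lamP (HElt z0) (tval ch) | ch : (m.+1).-tuple (hat P) <- enum Pchains] in
  #|[set ch in PTchains | ascent_free (labseq (@Rlab d P t n dL L lamP) R0 ch)]| =
  (\sum_(w <- W | NDA m.+1 w && ~~ last_asc w)
      c w * t ^ asc w * (1 + t) ^ (m - 2 * asc w)
   + \sum_(w <- W | NDA m.+1 w && last_asc w)
      c w * t ^ asc w * (1 + t) ^ (m.+1 - 2 * asc w))%N.
Proof.
move=> z0_least P_semipure plength_n _ _ R0 PT Pc c W.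
rewrite split_weight /W /c sum_by_fibres.
exact: (count_ascent_free_chains z0_least P_semipure t m plength_n lamP).
Qed.
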